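(* Let $\lambda=2$, $c_0=\ln 4$, $c_2=2^{-26/9}$, and let $F:\mathbb{R}^2\to\mathbb{R}^2$ be $$F(a,b)=\big(-2a-e(a,b),\; b+c_0+e(a,b)\big),\qquad e(a,b)=\ln\!\big(1+c_2e^{-(4a+b)/3}\big).$$ Let $\gamma^{inv}:[2.56,\infty)\to[-0.03,0.03]$ be the $F$-invariant curve described in the context. Let $I$ be the line segment $\{(t,\,2t-\tfrac{2}{3}\ln 2^2): -0.4\le t\le 0\}$ in the $(a,b)$-plane. Then $F^3(I)$ intersects the graph $\{(\gamma^{inv}(b),b): b\ge 2.56\}$ of $\gamma^{inv}$ transversally.
   Context: Set $X=[-0.03,0.03]\times[2.56,\infty)$ in the $(a,b)$-plane, and let $\Gamma$ be the set of functions $\gamma:[2.56,\infty)\to[-0.03,0.03]$ with Lipschitz constant at most $1$; the graph of $\gamma$ is $\{(\gamma(b),b)\}\subset X$. The map $F$ is injective, $F^{-1}$ is defined on $X$, and for $\gamma\in\Gamma$ the set $F^{-1}(\text{graph }\gamma)\cap X$ is again the graph of an element $T\gamma\in\Gamma$; $T$ is a contraction of $\Gamma$ in the sup metric, and $\gamma^{inv}$ denotes its unique fixed point, i.e. the unique $\gamma\in\Gamma$ with $F^{-1}(\text{graph }\gamma)\cap X=\text{graph }\gamma$. (The map $F$ is the recursion $(x,y)\mapsto(y,1+\lambda^2x^2/y)$ written in the coordinates $u=\ln x$, $v=\ln y$, $a=u-v+c_0/3$, $b=2u+v$.) *)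

From Stdlib Require Import Reals Lra.
From Coquelicot Require Import Coquelicot.
Open Scope R_scope.

Definition lam : R := 2.
Definition c0 : R := ln 4.
Definition c2 : R := Rpower 2 (-(26/9)).

Definition e_fun (a b : R) : R := ln (1 + c2 * exp (- (4 * a + b) / 3)).

Definition F (p : R * R) : R * R :=
  (- 2 * fst p - e_fun (fst p) (snd p), snd p + c0 + e_fun (fst p) (snd p)).

Definition inX (p : R * R) : Prop :=
  -0.03 <= fst p <= 0.03 /\ 2.56 <= snd p.

(* Gamma: functions [2.56,oo) -> [-0.03,0.03] with Lipschitz constant <= 1
   (represented as total functions R -> R; only values on [2.56,oo) matter). *)
Definition in_Gamma (g : R -> R) : Prop :=
  (forall b, 2.56 <= b -> -0.03 <= g b <= 0.03) /\
  (forall b1 b2, 2.56 <= b1 -> 2.56 <= b2 -> Rabs (g b1 - g b2) <= Rabs (b1 - b2)).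

Definition graph (g : R -> R) (p : R * R) : Prop :=
  2.56 <= snd p /\ fst p = g (snd p).

(* F^{-1}(graph g) ∩ X = graph g, written without F^{-1} (F injective):
   a point p of X has F p on the graph iff p is on the graph. *)
Definition F_invariant (g : R -> R) : Prop :=
  (forall p, graph g p -> inX p) /\
  (forall p, inX p -> (graph g (F p) <-> graph g p)).

Definition Iseg (t : R) : R * R := (t, 2 * t - 2 / 3 * ln (lam ^ 2)).

Definition curve (t : R) : R * R := F (F (F (Iseg t))).

(* Transversal intersection of the smooth curve F^3(I) with the Lipschitz-1
   graph: the intersection is nonempty and at every intersection point the
   tangent vector of F^3(I) lies strictly outside the cone |da| <= |db|
   that contains all secants/tangents of graphs of elements of Gamma. *)
Definition meets_transversally (g : R -> R) : Prop :=
  (exists t, -0.4 <= t <= 0 /\ graph g (curve t)) /\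
  (forall t, -0.4 <= t <= 0 -> graph g (curve t) ->
     exists da db : R,
       is_derive (fun s => fst (curve s)) t da /\
       is_derive (fun s => snd (curve s)) t db /\
       Rabs db < Rabs da).

From Stdlib Require Import Reals Lra Lia.
From Coquelicot Require Import Coquelicot.
Open Scope R_scope.

(* Along I the orbit is explicit: writing e_i for the error term e at the i-th iterate of I(t),
   F^3(I(t)) = (-8t - 4e_0 + 2e_1 - e_2, 2t + (14/3) ln 2 + e_0 + e_1 + e_2).
   The bounds x/(1+x) <= ln(1+x) <= x, 1 + x <= exp x <= (1 - x/n)^(-n) then show that this curve
   lies to the right of the strip |a| <= 0.03 at t = -0.2, to its left at t = 0, and has b >= 2.56
   in between, so it crosses the graph of every 1-Lipschitz function [2.56, oo) -> [-0.03, 0.03].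
   The differential of F is (da, db) |-> (-2da + s(4da + db)/3, db - s(4da + db)/3) with
   s = q/(1+q) in [0, 1), where e = ln(1+q): it sends the tangent (1, 2) of I to a positive
   multiple of (-1, 1), then to a multiple of (2 - s_1, 1 + s_1), and finally, since s_2 < 5/6 along I, strictly outside
   the cone |da| <= |db| containing all tangents of such graphs. *)

Lemma exp_le_exp x y : x <= y -> exp x <= exp y.
Proof. intros [Hlt | ->]; [left; apply exp_increasing, Hlt | right; reflexivity]. Qed.

Lemma exp_INR_mult n x : exp (INR n * x) = exp x ^ n.
Proof.
  induction n as [|n IH]; simpl pow.
  - rewrite Rmult_0_l; apply exp_0.
  - rewrite S_INR, Rmult_plus_distr_r, Rmult_1_l, exp_plus, IH; ring.
Qed.

Lemma exp_le_inv_1_sub x : x < 1 -> exp x <= / (1 - x).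
Proof.
  intros Hx.
  assert (Hneg := exp_ineq1_le (- x)). rewrite exp_Ropp in Hneg.
  assert (Hpos := exp_pos x).
  apply Rmult_le_reg_l with (1 - x); [lra |].
  rewrite Rinv_r by lra.
  apply Rmult_le_reg_r with (/ exp x); [apply Rinv_0_lt_compat, Hpos |].
  replace ((1 - x) * exp x * / exp x) with (1 - x) by (field; lra). lra.
Qed.

Lemma exp_le_inv_pow n x : (0 < n)%nat -> x < INR n -> exp x <= (/ (1 - x / INR n)) ^ n.
Proof.
  intros Hn Hx. assert (HnR : 0 < INR n) by (apply lt_0_INR; exact Hn).
  replace x with (INR n * (x / INR n)) at 1 by (field; lra).
  rewrite exp_INR_mult. apply pow_incr. split.
  - left; apply exp_pos.
  - apply exp_le_inv_1_sub. apply Rmult_lt_reg_r with (INR n); [exact HnR |].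
    unfold Rdiv; rewrite Rmult_assoc, Rinv_l by lra. lra.
Qed.

Lemma ln_le_sub_1 y : 0 < y -> ln y <= y - 1.
Proof.
  intros Hy. destruct (Rle_lt_dec (ln y) (y - 1)) as [Hle | Hlt]; [exact Hle |].
  apply exp_increasing in Hlt. rewrite exp_ln in Hlt by exact Hy.
  assert (H := exp_ineq1_le (y - 1)). lra.
Qed.

Lemma ln2_bounds : 0.62 <= ln 2 <= 0.75.
Proof.
  split.
  - destruct (Rle_lt_dec 0.62 (ln 2)) as [Hle | Hlt]; [exact Hle |].
    apply exp_increasing in Hlt. rewrite exp_ln in Hlt by lra.
    assert (H := exp_le_inv_pow 4 0.62 ltac:(lia) ltac:(simpl; lra)).
    simpl in H. lra.
  - destruct (Rle_lt_dec (ln 2) 0.75) as [Hle | Hlt]; [exact Hle |].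
    apply exp_increasing in Hlt. rewrite exp_ln in Hlt by lra.
    assert (H := exp_ge_taylor 0.75 3 ltac:(lra)).
    simpl in H. lra.
Qed.

Lemma c2_pos : 0 < c2.
Proof. apply exp_pos. Qed.

Lemma c2_pow_9 : c2 ^ 9 = / 2 ^ 26.
Proof.
  rewrite <- (Rpower_pow 9 c2 c2_pos). unfold c2. rewrite Rpower_mult.
  replace (- (26 / 9) * INR 9) with (- INR 26) by (simpl; field).
  rewrite Rpower_Ropp, Rpower_pow by lra. reflexivity.
Qed.

Lemma c2_bounds : 1/8 <= c2 <= 1/7.
Proof.
  assert (H9 := c2_pow_9). assert (Hpos := c2_pos). split.
  - destruct (Rle_lt_dec (1/8) c2) as [Hle | Hlt]; [exact Hle |].
    assert (Hpow : c2 ^ 9 <= (1/8) ^ 9) by (apply pow_incr; lra).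
    rewrite H9 in Hpow. simpl in Hpow. lra.
  - destruct (Rle_lt_dec c2 (1/7)) as [Hle | Hlt]; [exact Hle |].
    assert (Hpow : (1/7) ^ 9 <= c2 ^ 9) by (apply pow_incr; lra).
    rewrite H9 in Hpow. simpl in Hpow. lra.
Qed.

Lemma c0_eq : c0 = 2 * ln 2.
Proof. unfold c0. replace 4 with (2 * 2) by ring. rewrite ln_mult by lra. ring. Qed.

Lemma ln_lam_sqr : ln (lam ^ 2) = 2 * ln 2.
Proof. unfold lam. replace (2 ^ 2) with 4 by ring. exact c0_eq. Qed.

Definition w (p : R * R) : R := - (4 * fst p + snd p) / 3.
Definition q (p : R * R) : R := c2 * exp (w p).
Definition E (p : R * R) : R := ln (1 + q p).
Definition sig (p : R * R) : R := q p / (1 + q p).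

Lemma F_fst p : fst (F p) = -2 * fst p - E p.
Proof. reflexivity. Qed.

Lemma F_snd p : snd (F p) = snd p + 2 * ln 2 + E p.
Proof. unfold F; simpl. rewrite c0_eq. reflexivity. Qed.

Lemma q_pos p : 0 < q p.
Proof. apply Rmult_lt_0_compat; [exact c2_pos | apply exp_pos]. Qed.

Lemma q_le_pow n p X :
  (0 < n)%nat -> X < INR n -> w p <= X -> q p <= (/ (1 - X / INR n)) ^ n / 7.
Proof.
  intros Hn HXn HX. unfold q.
  assert (Hexp := Rle_trans _ _ _ (exp_le_exp _ _ HX) (exp_le_inv_pow n X Hn HXn)).
  assert (Hc2 := c2_bounds). assert (Hpos := exp_pos (w p)). nra.
Qed.

Lemma q_ge_1_add p X : X <= w p -> (1 + X) / 8 <= q p.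
Proof.
  intros HX. unfold q.
  assert (Hexp := Rle_trans _ _ _ (exp_ineq1_le X) (exp_le_exp _ _ HX)).
  assert (Hc2 := c2_bounds). assert (Hpos := exp_pos (w p)). nra.
Qed.

Ltac q_upper n X :=
  eapply Rle_trans; [apply (q_le_pow n _ X); [lia | simpl; lra | lra] | simpl; lra].

Ltac q_lower X := eapply Rle_trans; [| apply (q_ge_1_add _ X); lra]; lra.

Lemma E_le_q p : E p <= q p.
Proof. unfold E. assert (H := q_pos p). assert (Hln := ln_le_sub_1 (1 + q p)). lra. Qed.

Lemma E_ge p c : 0 <= c -> c <= q p -> c / (1 + c) <= E p.
Proof.
  intros Hc Hcq. unfold E. assert (Hq := q_pos p).
  assert (Hln := ln_le_sub_1 (/ (1 + q p)) ltac:(apply Rinv_0_lt_compat; lra)).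
  rewrite ln_Rinv in Hln by lra.
  assert (Hinv : / (1 + q p) <= / (1 + c)) by (apply Rinv_le_contravar; lra).
  replace (c / (1 + c)) with (1 - / (1 + c)) by (field; lra). lra.
Qed.

Lemma E_nonneg p : 0 <= E p.
Proof. assert (H := E_ge p 0 (Rle_refl 0) (Rlt_le _ _ (q_pos p))). lra. Qed.

Lemma sig_range p : 0 <= sig p < 1.
Proof.
  unfold sig. assert (Hq := q_pos p). split.
  - apply Rlt_le, Rdiv_lt_0_compat; lra.
  - apply Rmult_lt_reg_r with (1 + q p); [lra |]. field_simplify; lra.
Qed.

Lemma sig_lt_5_6 p : q p < 5 -> sig p < 5/6.
Proof.
  intros H5. unfold sig. assert (Hq := q_pos p).
  apply Rmult_lt_reg_r with (1 + q p); [lra |]. field_simplify; lra.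
Qed.

Definition is_derive_pair (P : R -> R * R) (t : R) (v : R * R) : Prop :=
  is_derive (fun s => fst (P s)) t (fst v) /\ is_derive (fun s => snd (P s)) t (snd v).

Definition dF (s : R) (v : R * R) : R * R :=
  (-2 * fst v + s * (4 * fst v + snd v) / 3, snd v - s * (4 * fst v + snd v) / 3).

Lemma is_derive_w P t v :
  is_derive_pair P t v -> is_derive (fun s => w (P s)) t (- (4 * fst v + snd v) / 3).
Proof.
  intros [Ha Hb]. unfold w, Rdiv.
  apply is_derive_ext with (fun s => / 3 * - (4 * fst (P s) + snd (P s))).
  { intros s; apply Rmult_comm. }
  rewrite Rmult_comm.
  apply (is_derive_scal (fun s => - (4 * fst (P s) + snd (P s)))).
  apply (is_derive_opp (fun s => 4 * fst (P s) + snd (P s))).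
  apply (is_derive_plus (fun s => 4 * fst (P s)) (fun s => snd (P s))); [| exact Hb].
  apply (is_derive_scal (fun s => fst (P s))), Ha.
Qed.

Lemma is_derive_E P t v :
  is_derive_pair P t v -> is_derive (fun s => E (P s)) t (- sig (P t) * (4 * fst v + snd v) / 3).
Proof.
  intros HP.
  set (h := fun u => ln (1 + c2 * exp u)).
  assert (Hh : is_derive h (w (P t)) (sig (P t))).
  { assert (Hq := q_pos (P t)). unfold h.
    auto_derive; unfold sig, q in *; [lra |]. field. lra. }
  replace (- sig (P t) * (4 * fst v + snd v) / 3)
    with (- (4 * fst v + snd v) / 3 * sig (P t)) by field.
  exact (is_derive_comp h (fun s => w (P s)) t _ _ Hh (is_derive_w P t v HP)).
Qed.

Lemma is_derive_pair_F P t v :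
  is_derive_pair P t v -> is_derive_pair (fun s => F (P s)) t (dF (sig (P t)) v).
Proof.
  intros HP. assert (HE := is_derive_E P t v HP). destruct HP as [Ha Hb]. split; simpl.
  - replace (-2 * fst v + sig (P t) * (4 * fst v + snd v) / 3)
      with (-2 * fst v - - sig (P t) * (4 * fst v + snd v) / 3) by field.
    apply (is_derive_minus (fun s => -2 * fst (P s)) (fun s => E (P s))); [| exact HE].
    apply (is_derive_scal (fun s => fst (P s))), Ha.
  - replace (snd v - sig (P t) * (4 * fst v + snd v) / 3)
      with (snd v + 0 + - sig (P t) * (4 * fst v + snd v) / 3) by field.
    apply (is_derive_plus (fun s => snd (P s) + c0) (fun s => E (P s))); [| exact HE].
    apply (is_derive_plus (fun s => snd (P s)) (fun _ => c0)); [exact Hb | apply (is_derive_const c0)].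
Qed.

Lemma is_derive_pair_Iseg t : is_derive_pair Iseg t (1, 2).
Proof. unfold Iseg; split; simpl; auto_derive; auto; ring. Qed.

Definition curve_tangent (t : R) : R * R :=
  dF (sig (F (F (Iseg t)))) (dF (sig (F (Iseg t))) (dF (sig (Iseg t)) (1, 2))).

Lemma is_derive_pair_curve t : is_derive_pair curve t (curve_tangent t).
Proof.
  unfold curve, curve_tangent.
  do 3 apply (is_derive_pair_F (fun s => _)).
  apply is_derive_pair_Iseg.
Qed.

Lemma dF3_outside_cone s0 s1 s2 :
  0 <= s0 < 1 -> 0 <= s1 < 1 -> 0 <= s2 < 5/6 ->
  Rabs (snd (dF s2 (dF s1 (dF s0 (1, 2))))) < Rabs (fst (dF s2 (dF s1 (dF s0 (1, 2))))).
Proof.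
  intros H0 H1 H2. unfold dF; simpl.
  set (m := 2 * (1 - s0)).
  set (A := 2 * (2 - s1) - s2 * (3 - s1)).
  set (B := 1 + s1 - s2 * (3 - s1)).
  match goal with |- Rabs ?y < Rabs ?x =>
    replace y with (m * B) by (unfold m, B; field);
    replace x with (- (m * A)) by (unfold m, A; field) end.
  assert (Hm : 0 < m) by (unfold m; lra).
  assert (HBA : B < A) by (unfold A, B; lra).
  assert (HAB : - A < B) by (unfold A, B; nra).
  rewrite Rabs_Ropp, !Rabs_mult, (Rabs_right m) by lra.
  apply Rmult_lt_compat_l; [exact Hm |].
  rewrite (Rabs_right A) by lra. apply Rabs_def1; lra.
Qed.

Lemma orbit_formulas t :
  w (Iseg t) = -2 * t + 4/9 * ln 2 /\
  w (F (Iseg t)) = (6 * t + 3 * E (Iseg t) - 2/3 * ln 2) / 3 /\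
  w (F (F (Iseg t))) = - (18 * t + 9 * E (Iseg t) - 3 * E (F (Iseg t)) + 8/3 * ln 2) / 3 /\
  fst (curve t) = -8 * t - 4 * E (Iseg t) + 2 * E (F (Iseg t)) - E (F (F (Iseg t))) /\
  snd (curve t) = 2 * t + 14/3 * ln 2 + E (Iseg t) + E (F (Iseg t)) + E (F (F (Iseg t))).
Proof.
  unfold curve, w. repeat first [rewrite F_fst | rewrite F_snd].
  unfold Iseg; rewrite ln_lam_sqr; simpl. repeat split; field.
Qed.

Lemma q_orbit2_lt_5 t : -0.4 <= t <= 0 -> q (F (F (Iseg t))) < 5.
Proof.
  intros Ht. destruct (orbit_formulas t) as (w0 & w1 & w2 & _).
  assert (Hln2 := ln2_bounds).
  assert (Q0 : q (Iseg t) <= 3.84 / 7) by q_upper 4%nat 1.14.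
  assert (E0 := E_le_q (Iseg t)). assert (E0' := E_nonneg (Iseg t)).
  assert (Q1 : q (F (Iseg t)) <= 1.56 / 7) by q_upper 4%nat 0.42.
  assert (E1 := E_le_q (F (Iseg t))).
  assert (Q2 : q (F (F (Iseg t))) <= 18.9 / 7) by q_upper 4%nat 2.08.
  lra.
Qed.

Lemma curve_fst_at_0 : fst (curve 0) < -0.03.
Proof.
  destruct (orbit_formulas 0) as (w0 & w1 & _ & a3 & _).
  assert (Hln2 := ln2_bounds).
  assert (Q0 : q (Iseg 0) <= 1.516 / 7) by q_upper 1%nat 0.34.
  assert (Q0' : 1.27 / 8 <= q (Iseg 0)) by q_lower 0.27.
  assert (E0 := E_le_q (Iseg 0)).
  assert (E0' := E_ge (Iseg 0) (1.27 / 8) ltac:(lra) Q0').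
  assert (Q1 : q (F (Iseg 0)) <= 1.087 / 7) by q_upper 1%nat 0.08.
  assert (E1 := E_le_q (F (Iseg 0))). assert (E2 := E_nonneg (F (F (Iseg 0)))).
  lra.
Qed.

Lemma curve_fst_at_m02 : 0.03 < fst (curve (-0.2)).
Proof.
  destruct (orbit_formulas (-0.2)) as (w0 & w1 & w2 & a3 & _).
  assert (Hln2 := ln2_bounds).
  assert (Q0 : q (Iseg (-0.2)) <= 2.27 / 7) by q_upper 4%nat 0.74.
  assert (Q0' : 1.675 / 8 <= q (Iseg (-0.2))) by q_lower 0.675.
  assert (E0 := E_le_q (Iseg (-0.2))).
  assert (E0' := E_ge (Iseg (-0.2)) (1.675 / 8) ltac:(lra) Q0').
  assert (Q1 : q (F (Iseg (-0.2))) <= 1 / 7) by q_upper 1%nat 0.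
  assert (E1 := E_le_q (F (Iseg (-0.2)))). assert (E1' := E_nonneg (F (Iseg (-0.2)))).
  assert (Q2 : q (F (F (Iseg (-0.2)))) <= 1.39 / 7) by q_upper 1%nat 0.28.
  assert (E2 := E_le_q (F (F (Iseg (-0.2))))).
  lra.
Qed.

Lemma curve_snd_ge t : -0.2 <= t <= 0 -> 2.56 <= snd (curve t).
Proof.
  intros Ht. destruct (orbit_formulas t) as (w0 & _ & _ & _ & b3).
  assert (Hln2 := ln2_bounds).
  assert (Q0 : 1 / 8 <= q (Iseg t)) by q_lower 0.
  assert (E0 := E_ge (Iseg t) (1 / 8) ltac:(lra) Q0).
  assert (E1 := E_nonneg (F (Iseg t))). assert (E2 := E_nonneg (F (F (Iseg t)))).
  lra.
Qed.

Lemma Rmax_lipschitz c x y : Rabs (Rmax c x - Rmax c y) <= Rabs (x - y).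
Proof.
  unfold Rmax. destruct (Rle_dec c x), (Rle_dec c y);
    unfold Rabs; repeat destruct Rcase_abs; lra.
Qed.

Lemma continuity_in_Gamma_clamped g : in_Gamma g -> continuity (fun b => g (Rmax 2.56 b)).
Proof.
  intros [_ Hlip] x eps Heps. exists eps. split; [exact Heps |].
  intros y [_ Hy]. simpl in *. unfold R_dist in *.
  eapply Rle_lt_trans; [| exact Hy].
  eapply Rle_trans; [apply Hlip; apply Rmax_l | apply Rmax_lipschitz].
Qed.

Lemma in_Gamma_graph_crossing g (c : R -> R * R) u v :
  in_Gamma g -> u < v ->
  (forall t, continuity_pt (fun s => fst (c s)) t) ->
  (forall t, continuity_pt (fun s => snd (c s)) t) ->
  0.03 < fst (c u) -> fst (c v) < -0.03 ->
  (forall t, u <= t <= v -> 2.56 <= snd (c t)) ->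
  exists t, u <= t <= v /\ graph g (c t).
Proof.
  intros Hg Huv Hc1 Hc2 Hu Hv Hb.
  set (h := fun t => g (Rmax 2.56 (snd (c t))) - fst (c t)).
  assert (Hh : continuity h).
  { intros t. apply continuity_pt_minus; [| apply Hc1].
    apply (continuity_pt_comp (fun s => snd (c s)) (fun b => g (Rmax 2.56 b))); [apply Hc2 |].
    apply continuity_in_Gamma_clamped, Hg. }
  assert (Hbound := proj1 Hg).
  assert (Hhu : h u < 0).
  { assert (H := Hbound _ (Rmax_l 2.56 (snd (c u)))). unfold h; lra. }
  assert (Hhv : 0 < h v).
  { assert (H := Hbound _ (Rmax_l 2.56 (snd (c v)))). unfold h; lra. }
  destruct (IVT h u v Hh Huv Hhu Hhv) as [t [Ht Hht]].
  exists t. split; [exact Ht |].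
  assert (Hbt := Hb t Ht). split; [exact Hbt |].
  unfold h in Hht. rewrite Rmax_right in Hht by lra. lra.
Qed.

Lemma continuity_pt_curve t :
  continuity_pt (fun s => fst (curve s)) t /\ continuity_pt (fun s => snd (curve s)) t.
Proof.
  destruct (is_derive_pair_curve t) as [Ha Hb].
  split; apply continuity_pt_filterlim.
  - apply (ex_derive_continuous (fun s => fst (curve s))). eexists; exact Ha.
  - apply (ex_derive_continuous (fun s => snd (curve s))). eexists; exact Hb.
Qed.

Theorem lemma1 : forall g : R -> R,
  in_Gamma g -> F_invariant g -> meets_transversally g.
Proof.
  intros g Hg _. split.
  - destruct (in_Gamma_graph_crossing g curve (-0.2) 0 Hg) as [t [Ht Hgraph]].
    + lra.
    + apply continuity_pt_curve.
    + apply continuity_pt_curve.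
    + exact curve_fst_at_m02.
    + exact curve_fst_at_0.
    + exact curve_snd_ge.
    + exists t. split; [lra | exact Hgraph].
  - intros t Ht _.
    destruct (is_derive_pair_curve t) as [Ha Hb].
    exists (fst (curve_tangent t)), (snd (curve_tangent t)).
    split; [exact Ha |]. split; [exact Hb |].
    apply dF3_outside_cone; try apply sig_range.
    split; [apply sig_range | apply sig_lt_5_6, q_orbit2_lt_5, Ht].
Qed.
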